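(* Let $(M,g)$ be a Riemannian manifold and $F_1,\dots,F_k,G:M\to\mathbb{R}$ smooth. Then the standard control vector field satisfies $\mathbf{v_0}=\mathbf{i}_{dG}(\mathbf{T})$, i.e. $\mathbf{v_0}(\alpha)=\mathbf{T}(dG,\alpha)$ for every 1-form $\alpha$.
   Context: $\langle\cdot,\cdot\rangle$ is the inner product of $g$, $\nabla$ the gradient, $g^{-1}$ the inverse metric as a contravariant 2-tensor. For smooth $f_1,\dots,f_r,g_1,\dots,g_s$, $\Sigma_{(g_1,\dots,g_s)}^{(f_1,\dots,f_r)}$ is the $r\times s$ matrix with entry $\langle\nabla g_b,\nabla f_a\rangle$ in row $a$, column $b$; $\widehat{\cdot}$ denotes omission; the determinant of an empty matrix is $1$. The standard control vector field is $$\mathbf{v_0}=\sum_{i=1}^k(-1)^{i+k+1}\det\Sigma_{(F_1,\dots,\widehat{F_i},\dots,F_k,G)}^{(F_1,\dots,F_k)}\nabla F_i+\det\Sigma_{(F_1,\dots,F_k)}^{(F_1,\dots,F_k)}\nabla G.$$ $\nabla F_i\otimes\nabla F_j(\alpha,\beta):=\alpha(\nabla F_i)\beta(\nabla F_j)$ and $$\mathbf{T}:=\sum_{i,j=1}^k(-1)^{i+j+1}\det\Sigma_{(F_1,\dots,\widehat{F_i},\dots,F_k)}^{(F_1,\dots,\widehat{F_j},\dots,F_k)}\nabla F_i\otimes\nabla F_j+\det\Sigma_{(F_1,\dots,F_k)}^{(F_1,\dots,F_k)}g^{-1}.$$ *)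

From HB Require Import structures.
From mathcomp Require Import all_boot all_order all_algebra.
From mathcomp Require Import all_classical all_reals all_analysis.
Set Implicit Arguments. Unset Strict Implicit. Unset Printing Implicit Defensive.
Import Order.TTheory GRing.Theory Num.Theory.
Local Open Scope ring_scope.

Section RiemannLocal.
Variables (R : realType) (n : nat).

(* Points of the coordinate chart are row vectors 'rV_n; tangent vectors are
   column vectors 'cV_n; covectors (values of 1-forms) are row vectors 'rV_n,
   acting on tangent vectors by matrix product. *)

Definition partial (f : 'rV[R]_n -> R) (j : 'I_n) (x : 'rV[R]_n) : R :=
  derive1 (fun t : R => f (x + t *: delta_mx 0 j)) 0.

Definition dcov (f : 'rV[R]_n -> R) (x : 'rV[R]_n) : 'rV[R]_n :=
  \row_j partial f j x.

Definition grad (g : 'rV[R]_n -> 'M[R]_n) (f : 'rV[R]_n -> R) (x : 'rV[R]_n)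
  : 'cV[R]_n := invmx (g x) *m (dcov f x)^T.

Definition ip (G : 'M[R]_n) (u v : 'cV[R]_n) : R := (u^T *m G *m v) 0 0.

(* Sigma^{(a_1..a_r)}_{(b_1..b_s)} : entry <b_j, a_i> in row i, column j. *)
Definition Sigma (G : 'M[R]_n) r s (a : 'I_r -> 'cV[R]_n) (b : 'I_s -> 'cV[R]_n)
  : 'M[R]_(r, s) := \matrix_(i, j) ip G (b j) (a i).

Definition ev (al : 'rV[R]_n) (v : 'cV[R]_n) : R := (al *m v) 0 0.

Definition ginv (G : 'M[R]_n) (al be : 'rV[R]_n) : R :=
  (al *m invmx G *m be^T) 0 0.

End RiemannLocal.

Definition snoc (X : Type) m (f : 'I_m -> X) (x : X) : 'I_m.+1 -> X :=
  fun j => if (insub (val j) : option 'I_m) is Some j' then f j' else x.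

Definition omit (X : Type) m (i : 'I_m.+1) (f : 'I_m.+1 -> X) : 'I_m -> X :=
  fun j => f (lift i j).

Definition omitk (X : Type) k (i : 'I_k) (f : 'I_k -> X) : 'I_k.-1 -> X :=
  fun j => f (insubd i (bump i j)).

Section Fields.
Variables (R : realType) (n k : nat).
Variables (g : 'rV[R]_n -> 'M[R]_n) (F : 'I_k -> 'rV[R]_n -> R) (G : 'rV[R]_n -> R).

Definition v0 (x : 'rV[R]_n) : 'cV[R]_n :=
  let gF := fun i => grad g (F i) x in
  let gG := grad g G x in
  \sum_(i < k) ((-1) ^+ (i.+1 + k + 1)%N
      * \det (Sigma (g x) gF (omit (widen_ord (leqnSn k) i) (snoc gF gG))))
      *: gF i
  + \det (Sigma (g x) gF gF) *: gG.

Definition Tten (x : 'rV[R]_n) (al be : 'rV[R]_n) : R :=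
  let gF := fun i => grad g (F i) x in
  \sum_(i < k) \sum_(j < k)
     (-1) ^+ (i.+1 + j.+1 + 1)%N
       * \det (Sigma (g x) (omitk j gF) (omitk i gF))
       * (ev al (gF i) * ev be (gF j))
  + \det (Sigma (g x) gF gF) * ginv (g x) al be.

End Fields.

(** The identity is pointwise linear algebra. Expanding the minor in the
    [i]-th coefficient of [v0] along its last column, the one made of the
    products [<grad G, grad F_r>], writes that coefficient as a signed sum of
    the minors of [T] weighted by [<grad G, grad F_r> = dG(grad F_r)].  On the
    other hand [alpha(grad G) = g^-1(dG, alpha)] by symmetry of [g^-1].  So
    [alpha(v0)] and [T(dG, alpha)] agree term by term. *)

From HB Require Import structures.
From mathcomp Require Import all_boot all_order all_algebra.
From mathcomp Require Import all_classical all_reals all_analysis.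
From mathcomp Require Import ring zify.
Import Order.TTheory GRing.Theory Num.Theory.
Local Open Scope ring_scope.

Lemma val_insubd_bump m (i : 'I_m.+1) (p : 'I_m) :
  val (insubd i (bump i p) : 'I_m.+1) = bump i p.
Proof.
rewrite val_insubd ifT //; have := ltn_ord p; rewrite /bump.
by case: (leqP i p) => /= ?; lia.
Qed.

Lemma sign_cofactor_last (R : pzRingType) (i j m : nat) :
  (-1) ^+ (i.+1 + m.+1 + 1)%N * (-1) ^+ (j + m)%N =
  (-1) ^+ (j.+1 + i.+1 + 1)%N :> R.
Proof.
rewrite -exprD.
have -> : (i.+1 + m.+1 + 1 + (j + m) = (j.+1 + i.+1 + 1) + 2 * m)%N by lia.
by rewrite exprD exprM sqrrN !expr1n mulr1.
Qed.

Section Evaluation.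
Variables (R : realType) (n : nat) (al : 'rV[R]_n).

Lemma ev_add u v : ev al (u + v) = ev al u + ev al v.
Proof. by rewrite /ev mulmxDr mxE. Qed.

Lemma ev_scale c v : ev al (c *: v) = c * ev al v.
Proof. by rewrite /ev -scalemxAr mxE. Qed.

Lemma ev_sum I (r : seq I) (f : I -> 'cV[R]_n) :
  ev al (\sum_(i <- r) f i) = \sum_(i <- r) ev al (f i).
Proof. by rewrite /ev mulmx_sumr summxE. Qed.

End Evaluation.

Lemma posdef_unitmx {R : realType} {n} {Gm : 'M[R]_n} :
  (forall v : 'cV[R]_n, v != 0 -> 0 < (v^T *m Gm *m v) 0 0) -> Gm \in unitmx.
Proof.
move=> Gm_pos; rewrite unitmxE unitfE; apply/negP => /det0P [v v_neq0 vGm].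
have := Gm_pos v^T; rewrite trmx_eq0 => /(_ v_neq0).
by rewrite trmxK vGm mul0mx mxE ltxx.
Qed.

Section SymmetricMetric.
Variables (R : realType) (n : nat) (Gm : 'M[R]_n).
Hypothesis Gm_sym : Gm^T = Gm.

Lemma ip_sym u v : ip Gm u v = ip Gm v u.
Proof.
rewrite /ip; transitivity ((u^T *m Gm *m v)^T 0 0); first by rewrite [RHS]mxE.
by rewrite !trmx_mul trmxK Gm_sym mulmxA.
Qed.

(* Laplace expansion along the last column of the minor, the one holding [b];
   [omitk] with its [insubd]/[bump] encoding deletes the same index as [lift]. *)
Lemma det_Sigma_omit_snoc m (a : 'I_m.+1 -> 'cV[R]_n) (b : 'cV[R]_n)
    (i : 'I_m.+1) :
  \det (Sigma Gm a (omit (widen_ord (leqnSn m.+1) i) (snoc a b))) =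
  \sum_(r < m.+1) (-1) ^+ (r + m)%N * ip Gm b (a r)
      * \det (Sigma Gm (omitk i a) (omitk r a)).
Proof.
rewrite (expand_det_col _ ord_max); apply: eq_bigr => r _.
rewrite /cofactor mxE.
have -> : omit (widen_ord (leqnSn m.+1) i) (snoc a b) ord_max = b.
  rewrite /omit /snoc insubF //= /bump.
  by have := ltn_ord i; rewrite ltnS => ->; rewrite add1n ltnn.
rewrite -det_tr mulrCA mulrA; congr (_ * _ * \det _).
apply/matrixP => p q; rewrite !mxE ip_sym /omit /omitk /snoc.
case: insubP => [j' _ j'E | /negP lift_out].
  congr ip; congr a; apply: val_inj; rewrite ?j'E ?val_insubd_bump //=.
  by rewrite [bump m p]/bump leqNgt ltn_ord.
exfalso; apply: lift_out => /=; rewrite /bump.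
have := ltn_ord i; have := ltn_ord p.
by case: (leqP i p) => /= ?; lia.
Qed.

Lemma trmx_invmx_sym : (invmx Gm)^T = invmx Gm.
Proof. by rewrite trmx_inv Gm_sym. Qed.

Lemma ginv_ev (al be : 'rV[R]_n) : ginv Gm al be = ev be (invmx Gm *m al^T).
Proof.
rewrite /ginv /ev; transitivity ((al *m invmx Gm *m be^T)^T 0 0).
  by rewrite [RHS]mxE.
by rewrite !trmx_mul trmxK trmx_invmx_sym mulmxA.
Qed.

Hypothesis Gm_unit : Gm \in unitmx.

Lemma ip_invmx_l (al : 'rV[R]_n) (v : 'cV[R]_n) :
  ip Gm (invmx Gm *m al^T) v = ev al v.
Proof.
rewrite /ev /ip trmx_mul trmxK trmx_invmx_sym.
by rewrite -(mulmxA al) mulVmx // mulmx1.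
Qed.

End SymmetricMetric.

Theorem theorem4p4 (R : realType) (n k : nat)
  (U : set 'rV[R]_n) (g : 'rV[R]_n -> 'M[R]_n)
  (F : 'I_k -> 'rV[R]_n -> R) (G : 'rV[R]_n -> R) :
  (forall x, U x -> (g x)^T = g x) ->
  (forall x, U x -> forall v : 'cV[R]_n, v != 0 -> 0 < (v^T *m g x *m v) 0 0) ->
  (forall x, U x -> forall (i : 'I_k) (j : 'I_n),
      derivable (fun t : R => F i (x + t *: delta_mx 0 j)) 0 1) ->
  (forall x, U x -> forall j : 'I_n,
      derivable (fun t : R => G (x + t *: delta_mx 0 j)) 0 1) ->
  forall (alpha : 'rV[R]_n -> 'rV[R]_n) (x : 'rV[R]_n), U x ->
    ev (alpha x) (v0 g F G x) = Tten g F x (dcov G x) (alpha x).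
Proof.
move=> g_sym g_pos _ _ alpha x Ux.
have gx_sym := g_sym x Ux.
have gx_unit := posdef_unitmx (g_pos x Ux).
rewrite /v0 /Tten ev_add ev_scale /grad ginv_ev // ev_sum; congr (_ + _).
case: k F => [|m] F; first by rewrite !big_ord0.
rewrite exchange_big /=; apply: eq_bigr => j _.
rewrite ev_scale det_Sigma_omit_snoc // mulr_sumr mulr_suml.
apply: eq_bigr => r _.
rewrite ip_invmx_l // -(sign_cofactor_last R j r m).
set d := \det _; set a := ev (dcov G x) _; set b := ev (alpha x) _.
ring.
Qed.
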